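(* (a) There are absolute constants $c_1,c_2>0$ such that for all integers $m,n\ge 2$, $$c_1(m+n)\le \mathrm{bdim}(P_m\times P_n)\le c_2(m+n).$$ (b) For each integer $d\ge2$ there are constants $c_1(d),c_2(d)>0$ such that for all integers $n_1,\dots,n_d\ge2$, $$c_1(d)\sum_{i=1}^d n_i\le \mathrm{bdim}\Big(\prod_{i=1}^d P_{n_i}\Big)\le c_2(d)\sum_{i=1}^d n_i.$$
   Context: $P_m\times P_n$ denotes the Cartesian product of paths (the grid graph), and $\prod_{i=1}^d P_{n_i}$ the $d$-dimensional grid (iterated Cartesian product). $d(x,y)$ denotes graph distance. For an integer $k\ge1$ let $d_k(x,y)=\min\{d(x,y),k+1\}$. A function $f:V(G)\to\mathbb{Z}_{\ge 0}$ is a resolving broadcast of $G$ if for all distinct $x,y\in V(G)$ there is $z\in V(G)$ with $f(z)=i>0$ and $d_i(x,z)\ne d_i(y,z)$. The broadcast dimension $\mathrm{bdim}(G)$ is the minimum of $\sum_{v\in V(G)}f(v)$ over all resolving broadcasts $f$ of $G$. *)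

From mathcomp Require Import all_boot all_order all_algebra.
Set Implicit Arguments. Unset Strict Implicit. Unset Printing Implicit Defensive.

Section GraphDist.
Variables (T : finType) (e : rel T).

Fixpoint walk (k : nat) (x y : T) : bool :=
  if k is k'.+1 then [exists z, e x z && walk k' z y] else x == y.

(* Graph distance: the least j with a walk of length j from x to y
   (a shortest walk is a path, so j < #|T| when y is reachable).
   If y is unreachable the value #|T| is returned; this never happens in the
   (connected) grids considered below. *)
Definition dist (x y : T) : nat := find (fun j => walk j x y) (iota 0 #|T|).

Definition dist_k (k : nat) (x y : T) : nat := minn (dist x y) k.+1.

Definition resolving_broadcast (f : T -> nat) : bool :=
  [forall x, forall y, (x != y) ==>
     [exists z, (0 < f z) && (dist_k (f z) x z != dist_k (f z) y z)]].

(* There is a resolving broadcast of total cost n.  A broadcast of cost n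
   takes values in {0,...,n}, so it can be represented by f : T -> 'I_n.+1
   without loss of generality. *)
Definition has_resolving_broadcast_of_cost (n : nat) : bool :=
  [exists f : {ffun T -> 'I_n.+1},
     resolving_broadcast (fun v => nat_of_ord (f v)) &&
     (\sum_(v : T) (f v : nat) == n)].

Lemma has_resolving_broadcast_exists :
  exists n, has_resolving_broadcast_of_cost n.
Proof.
exists #|T|.
case: (posnP #|T|) => [T0 | Tpos].
  apply/existsP; exists [ffun=> ord0]; apply/andP; split.
    apply/forallP => x; have := card0_eq T0 x; by rewrite inE.
  by rewrite big1 ?T0 // => v _; rewrite ffunE.
apply/existsP; exists [ffun=> (inord 1 : 'I_#|T|.+1)].
have v1 : (inord 1 : 'I_#|T|.+1) = 1 :> nat by rewrite inordK // ltnS.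
apply/andP; split; last first.
  rewrite (eq_bigr (fun=> 1)); last by move=> v _; rewrite ffunE v1.
  by rewrite sum1_card.
apply/forallP => x; apply/forallP => y; apply/implyP => nxy.
apply/existsP; exists x; rewrite ffunE v1 /=.
have Hxx : dist x x = 0.
  rewrite /dist; move: Tpos; case: (#|T|) => [|k] //= _; by rewrite eqxx.
have Hyx : 0 < dist y x.
  rewrite /dist; move: Tpos; case: (#|T|) => [|k] //= _; by rewrite eq_sym (negbTE nxy).
rewrite /dist_k Hxx min0n; apply/eqP => H.
move: Hyx H; case: (dist y x) => [|k] //= _; by rewrite /minn; case: ifP.
Qed.

Definition bdim : nat := ex_minn has_resolving_broadcast_exists.

End GraphDist.

Definition path_adj (n : nat) : rel 'I_n :=
  fun a b => (a.+1 == b :> nat) || (b.+1 == a :> nat).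

Definition cart_adj (T1 T2 : finType) (e1 : rel T1) (e2 : rel T2) : rel (T1 * T2) :=
  fun u v => (e1 u.1 v.1 && (u.2 == v.2)) || ((u.1 == v.1) && e2 u.2 v.2).

Definition grid2_adj (m n : nat) : rel ('I_m * 'I_n) :=
  cart_adj (@path_adj m) (@path_adj n).

(* The d-dimensional grid prod_{i<d} P_{n_i}: vertices are tuples
   (x_0,...,x_{d-1}) with x_i in {0,...,n_i - 1}; two vertices are adjacent
   iff they differ in exactly one coordinate, in which they are adjacent in
   the corresponding path (the iterated Cartesian product of paths). *)
Definition gridv (d : nat) (n : 'I_d -> nat) : finType :=
  {dffun forall i : 'I_d, 'I_(n i)}.

Definition grid_adj (d : nat) (n : 'I_d -> nat) : rel (gridv n) :=
  fun x y => [exists i : 'I_d, path_adj (x i) (y i) &&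
                [forall j : 'I_d, (j != i) ==> (x j == y j)]].

Arguments path_adj n : clear implicits.
Arguments grid2_adj m n : clear implicits.
Arguments gridv d n : clear implicits.
Arguments grid_adj d n : clear implicits.

From mathcomp Require Import all_boot all_order all_algebra zify.
Set Implicit Arguments. Unset Strict Implicit. Unset Printing Implicit Defensive.

(* General facts about an arbitrary finite graph come first:
   - the graph distance is characterised by the local axioms of a path metric
     (dist_metric), and functions changing by at most one along edges are
     1-Lipschitz for it (dist_lipschitz);
   - upper bound: a resolving set S, every landmark broadcasting at a power at
     least the diameter, is a resolving broadcast of cost diam * |S|;
   - lower bound: along a "line" of N vertices on which some 1-Lipschitz
     coordinate is a bijection onto {0..N-1}, a vertex broadcasting at power k
     sees at most 2k + 1 line vertices and at most one line vertex is seen by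
     nobody, so N <= 3 bdim + 1;
   - bdim is invariant under graph isomorphism.
   For the grid the distance is the l1 distance; the origin and the d corners
   adjacent to it form a resolving set, and the d coordinate axes are lines,
   which gives part (b).  Part (a) is the case d = 2, since P_m x P_n is
   isomorphic to the two-dimensional grid with sides m and n. *)

Lemma card_bigcup_le (T I : finType) (P : pred I) (A : I -> {set T}) :
  #|\bigcup_(i | P i) A i| <= \sum_(i | P i) #|A i|.
Proof.
apply: (big_ind2 (fun (B : {set T}) b => #|B| <= b)) => //; first by rewrite cards0.
by move=> B1 b1 B2 b2 h1 h2; apply: leq_trans (leq_card_setU B1 B2) (leq_add h1 h2).
Qed.

Section BroadcastDimension.
Variables (T : finType) (e : rel T).

Lemma bdim_spec : has_resolving_broadcast_of_cost e (bdim e).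
Proof. by rewrite /bdim; case: ex_minnP. Qed.

Lemma bdim_min C : has_resolving_broadcast_of_cost e C -> bdim e <= C.
Proof. by rewrite /bdim; case: ex_minnP => m _ /(_ C). Qed.

(* A function changing by at most one along every edge is 1-Lipschitz for
   walks, hence for the graph distance (an unreachable pair has distance
   #|T|, which is large enough when p takes fewer than #|T| values). *)
Section Lipschitz.
Variables (p : T -> nat) (N : nat).
Hypothesis p_edge : forall x y, e x y -> p x <= p y + 1 /\ p y <= p x + 1.
Hypothesis p_lt : forall x, p x < N.
Hypothesis N_le : N <= #|T|.

Lemma walk_lipschitz k x y : walk e k x y -> p x <= p y + k /\ p y <= p x + k.
Proof.
elim: k x y => [|k IH] x y /=; first by move/eqP=> ->; rewrite addn0.
by case/existsP=> z /andP[/p_edge[h1 h2] /IH[h3 h4]]; lia.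
Qed.

Lemma dist_lipschitz x y : p x <= p y + dist e x y /\ p y <= p x + dist e x y.
Proof.
rewrite /dist; set P := (fun j => walk e j x y).
case: (boolP (has P (iota 0 #|T|))) => [hasP | /hasNfind->]; last first.
  by rewrite size_iota; have := p_lt x; have := p_lt y; lia.
apply: walk_lipschitz; have := nth_find 0 hasP.
by rewrite nth_iota // -{2}(size_iota 0 #|T|) -has_find.
Qed.

End Lipschitz.

Lemma dist_metric (L : T -> T -> nat) :
  (forall x y, (L x y == 0) = (x == y)) ->
  (forall x z y, e x z -> L x y <= L z y + 1) ->
  (forall x y k, L x y = k.+1 -> exists2 z, e x z & L z y = k) ->
  (forall x y, L x y < #|T|) ->
  forall x y, dist e x y = L x y.
Proof.
move=> L0 L_edge L_step L_lt.
have L_diag x : L x x = 0 by apply/eqP; rewrite L0.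
have walk_ge k x y : walk e k x y -> L x y <= k.
  elim: k x y => [|k IH] x y /=; first by move/eqP->; rewrite L_diag.
  by case/existsP=> z /andP[/(L_edge _ _ y) h /IH]; lia.
have walk_L k x y : L x y = k -> walk e k x y.
  elim: k x y => [|k IH] x y /=; first by move/eqP; rewrite L0.
  by case/L_step=> z exz /IH wz; apply/existsP; exists z; rewrite exz.
move=> x y; rewrite /dist; set P := (fun j => walk e j x y).
have hasP : has P (iota 0 #|T|).
  by apply/hasP; exists (L x y); [rewrite mem_iota add0n L_lt | exact: walk_L].
have := nth_find 0 hasP; have := @before_find _ 0 P (iota 0 #|T|) (L x y).
have find_lt : find P (iota 0 #|T|) < #|T| by rewrite -{2}(size_iota 0 #|T|) -has_find.
rewrite !nth_iota // add0n => before /walk_ge ge.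
case: (ltngtP (find P (iota 0 #|T|)) (L x y)) => // lt; first lia.
by move: (before lt); rewrite /P walk_L.
Qed.

Lemma dist_k_id D x y : dist e x y <= D -> dist_k e D x y = dist e x y.
Proof. by move=> le; rewrite /dist_k; apply/minn_idPl; exact: leqW. Qed.

Lemma bdim_landmarks (S : {set T}) D :
  0 < D -> (forall x y, dist e x y <= D) ->
  (forall x y, x != y -> exists2 v, v \in S & dist e x v != dist e y v) ->
  bdim e <= D * #|S|.
Proof.
move=> D0 diam resolving.
pose f v : 'I_(D * #|S|).+1 := inord (if v \in S then D else 0).
have fE v : f v = (if v \in S then D else 0) :> nat.
  rewrite inordK // ltnS; case: ifP => // vS.
  by rewrite leq_pmulr //; apply/card_gt0P; exists v.
apply: bdim_min; apply/existsP; exists [ffun v => f v]; apply/andP; split.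
  apply/forallP => x; apply/forallP => y; apply/implyP => /resolving[v vS dv].
  apply/existsP; exists v; rewrite !ffunE fE vS D0 /=.
  by rewrite !dist_k_id.
rewrite (eq_bigr (fun v => if v \in S then D else 0)); last by move=> v _; rewrite ffunE fE.
by rewrite -big_mkcond sum_nat_const mulnC.
Qed.

(* Let p be a coordinate changing by at most one along edges
   and g : 'I_N -> T a section of it (a "line" of N vertices).  A vertex z
   broadcasting at power k > 0 only sees the line vertices at distance <= k,
   whose coordinates lie in an interval of length 2k + 1; two line vertices
   seen by nobody cannot be resolved. *)
Section CoordinateLowerBound.
Variables (N : nat) (p : T -> nat) (g : 'I_N -> T).
Hypothesis p_edge : forall x y, e x y -> p x <= p y + 1 /\ p y <= p x + 1.
Hypothesis p_lt : forall x, p x < N.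
Hypothesis pg : forall t, p (g t) = t.

Let g_inj : injective g.
Proof. by move=> t1 t2 /(congr1 p); rewrite !pg => /val_inj. Qed.

Let N_le : N <= #|T|.
Proof. by rewrite -[N]card_ord; apply: leq_card g_inj. Qed.

Definition seen (z : T) (k : nat) : {set 'I_N} := [set t | dist e (g t) z <= k].

Lemma card_seen z k : #|seen z k| <= k.*2.+1.
Proof.
have lip := dist_lipschitz p_edge p_lt N_le.
pose shift (t : 'I_N) : 'I_k.*2.+1 := inord (t + k - p z).
rewrite -[X in _ <= X]card_ord; apply: (@leq_card_in _ _ shift).
move=> t1 t2; rewrite !inE => h1 h2 /(congr1 val) /=.
have := lip (g t1) z; have := lip (g t2) z; rewrite !pg => [[a1 a2] [b1 b2]].
rewrite !inordK; [move=> E; apply: val_inj => /=|lia|lia]; lia.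
Qed.

Lemma seen_cover (f : T -> nat) : resolving_broadcast e f ->
  #|~: \bigcup_(z | 0 < f z) seen z (f z)| <= 1.
Proof.
move=> res; apply/card_le1_eqP => t1 t2; rewrite !inE => /bigcupP u1 /bigcupP u2.
apply/eqP; apply/negPn/negP => t12.
have g12 : g t1 != g t2 by apply: contra t12 => /eqP/g_inj->.
move: res => /forallP/(_ (g t1))/forallP/(_ (g t2)); rewrite g12.
case/existsP=> z /andP[fz]; apply/negP; rewrite negbK.
have far t : t \notin seen z (f z) -> f z < dist e (g t) z by rewrite inE ltnNge.
have /far d1 : t1 \notin seen z (f z) by apply/negP => s1; apply: u1; exists z.
have /far d2 : t2 \notin seen z (f z) by apply/negP => s2; apply: u2; exists z.
by rewrite /dist_k !(minn_idPr _) //.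
Qed.

Lemma coordinate_lower_bound : N <= 3 * bdim e + 1.
Proof.
case/existsP: (bdim_spec) => f /andP[res /eqP cost].
pose F v := nat_of_ord (f v).
have {}cost : \sum_v F v = bdim e := cost.
set A := \bigcup_(z | 0 < F z) seen z (F z).
have cardA : #|A| <= \sum_(z | 0 < F z) (F z).*2.+1.
  apply: leq_trans (card_bigcup_le _ _) _.
  by apply: leq_sum => z _; exact: card_seen.
have sum_le : \sum_(z | 0 < F z) (F z).*2.+1 <= 3 * bdim e.
  rewrite -cost big_distrr big_mkcond /=; apply: leq_sum => z _.
  by rewrite -addnn; case: ifP; lia.
have cover : #|~: A| <= 1 := seen_cover res.
have := cardsC A; rewrite card_ord; lia.
Qed.

End CoordinateLowerBound.

End BroadcastDimension.

Section Isomorphism.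
Variables (T T' : finType) (e : rel T) (e' : rel T').
Variables (phi : T -> T') (psi : T' -> T).
Hypotheses (phiK : cancel phi psi) (psiK : cancel psi phi).
Hypothesis phi_adj : forall x y, e' (phi x) (phi y) = e x y.

Lemma walk_iso k x y : walk e' k (phi x) (phi y) = walk e k x y.
Proof.
elim: k x y => [|k IH] x y /=; first exact: (inj_eq (can_inj phiK)).
apply/existsP/existsP => [[z']|[z]]; last by exists (phi z); rewrite phi_adj IH.
by rewrite -[z']psiK phi_adj IH; exists (psi z').
Qed.

Lemma dist_iso x y : dist e' (phi x) (phi y) = dist e x y.
Proof.
rewrite /dist -(bij_eq_card (Bijective phiK psiK)).
by apply: eq_find => j; rewrite walk_iso.
Qed.

Lemma bdim_iso_le : bdim e' <= bdim e.
Proof.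
case/existsP: (bdim_spec e) => f /andP[res /eqP cost]; apply: bdim_min.
apply/existsP; exists [ffun v => f (psi v)]; apply/andP; split.
  apply/forallP => x'; apply/forallP => y'; apply/implyP => neq.
  have: psi x' != psi y' by rewrite (can_eq psiK).
  move: res => /forallP/(_ (psi x'))/forallP/(_ (psi y')) /implyP res /res.
  case/existsP=> z hz; apply/existsP; exists (phi z); rewrite !ffunE phiK.
  by rewrite /dist_k -{1}(psiK x') -{1}(psiK y') !dist_iso.
apply/eqP; rewrite -[RHS]cost (reindex phi) /=; last by exists psi => v _.
by apply: eq_bigr => v _; rewrite ffunE phiK.
Qed.

End Isomorphism.

Lemma bdim_iso (T T' : finType) (e : rel T) (e' : rel T')
    (phi : T -> T') (psi : T' -> T) :
  cancel phi psi -> cancel psi phi ->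
  (forall x y, e' (phi x) (phi y) = e x y) -> bdim e' = bdim e.
Proof.
move=> phiK psiK phi_adj; apply/eqP; rewrite eqn_leq (bdim_iso_le phiK psiK phi_adj) /=.
by apply: (bdim_iso_le psiK phiK) => x y; rewrite -phi_adj !psiK.
Qed.

Definition nat_dist (a b : nat) : nat := (a - b) + (b - a).

Lemma nat_dist_lt k (a b : 'I_k) : nat_dist a b < k.
Proof. by have := ltn_ord a; have := ltn_ord b; rewrite /nat_dist; lia. Qed.

Lemma sum_pred_lt_prod (d : nat) (m : 'I_d -> nat) : (forall i, 0 < m i) ->
  \sum_(i < d) (m i).-1 < \prod_(i < d) m i.
Proof.
elim: d m => [|d IH] m m_pos; first by rewrite big_ord0 big_ord0.
rewrite big_ord_recr [X in _ < X]big_ord_recr /=.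
have := IH (fun i => m (widen_ord (leqnSn d) i)) (fun i => m_pos _).
have := m_pos ord_max.
move: (\sum_(i < d) _) (\prod_(i < d) _) (m ord_max) => s p k; nia.
Qed.

Section Grid.
Variables (d : nat) (n : 'I_d -> nat).
Hypothesis n_ge2 : forall i, 2 <= n i.

Local Notation G := (gridv d n).
Local Notation adj := (grid_adj d n).

(* The grid vertex with the given coordinates (clamped to the origin when a
   coordinate is out of range). *)
Definition grid_point (a : 'I_d -> nat) : G :=
  [ffun j => insubd (Ordinal (leq_trans (isT : 0 < 2) (n_ge2 j))) (a j)].

Lemma grid_pointE a j : a j < n j -> grid_point a j = a j :> nat.
Proof. by move=> lt; rewrite ffunE val_insubd lt. Qed.

Definition l1 (x y : G) : nat := \sum_(j < d) nat_dist (x j) (y j).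

Lemma l1_split (x y : G) i :
  l1 x y = nat_dist (x i) (y i) + \sum_(j < d | j != i) nat_dist (x j) (y j).
Proof. exact: bigD1. Qed.

Lemma grid_adjP (x z : G) : adj x z ->
  exists2 i, path_adj _ (x i) (z i) & forall j, j != i -> x j = z j.
Proof.
case/existsP=> i /andP[xz /forallP same]; exists i => // j ji.
by apply/eqP; move/implyP: (same j); apply.
Qed.

Lemma card_grid : #|G| = \prod_(i < d) n i.
Proof.
rewrite card_dep_ffun foldrE big_map big_enum /=.
by apply: eq_bigr => i _; rewrite card_ord.
Qed.

(* One step of a shortest walk: move the first differing coordinate of x
   one unit towards y. *)
Lemma l1_step (x y : G) k : l1 x y = k.+1 -> exists2 z, adj x z & l1 z y = k.
Proof.
move=> l1xy; case: (pickP (fun i => x i != y i :> nat)) => [i xy | same]; last first.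
  move: l1xy; rewrite /l1 big1 // => j _; move/negbFE/eqP: (same j) => ->.
  by rewrite /nat_dist subnn.
pose a j := if j == i then (if x i < y i then (x i).+1 else (x i).-1) else x j.
have a_lt j : a j < n j.
  rewrite /a; case: eqP => [->|_]; last exact: ltn_ord.
  by have := ltn_ord (x i); have := ltn_ord (y i); case: ifP; lia.
have zE j : grid_point a j = a j :> nat by rewrite grid_pointE.
exists (grid_point a).
  apply/existsP; exists i; apply/andP; split.
    by rewrite /path_adj zE /a eqxx; move: xy; case: ifP; lia.
  apply/forallP => j; apply/implyP => ji; apply/eqP/ord_inj.
  by rewrite zE /a (negbTE ji).
move: l1xy; rewrite !(l1_split _ _ i) zE /a eqxx.
rewrite [X in _ -> _ + X = _](eq_bigr (fun j => nat_dist (x j) (y j))); last first.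
  by move=> j ji; rewrite zE /a (negbTE ji).
move: (\sum_(j < d | j != i) _) xy => R; rewrite /nat_dist; case: ifP; lia.
Qed.

Lemma grid_dist (x y : G) : dist adj x y = l1 x y.
Proof.
apply: dist_metric => {x y} [x y | x z y | x y k | x y].
- apply/idP/eqP => [|->]; last by rewrite /l1 big1 // => j _; rewrite /nat_dist subnn.
  move=> /eqP l0; apply/ffunP => j; apply/ord_inj/eqP.
  by move: l0; rewrite (l1_split _ _ j) /nat_dist; lia.
- case/grid_adjP=> i /orP xz same; rewrite !(l1_split _ _ i).
  rewrite (eq_bigr (fun j => nat_dist (z j) (y j))); last by move=> j /same->.
  by move: (\sum_(j < d | j != i) _) xz => R; rewrite /nat_dist; case=> /eqP; lia.
- exact: l1_step.
- rewrite card_grid; apply: leq_ltn_trans (sum_pred_lt_prod (fun i => ltnW (n_ge2 i))).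
  by apply: leq_sum => j _; have := nat_dist_lt (x j) (y j); lia.
Qed.

(* Lower bound from the i-th coordinate and the line through the origin
   in direction i. *)
Lemma grid_lower_coord i : n i <= 3 * bdim adj + 1.
Proof.
pose line (t : 'I_(n i)) := grid_point (fun j => if j == i then nat_of_ord t else 0).
apply: (@coordinate_lower_bound _ _ _ (fun x : G => nat_of_ord (x i)) line).
- move=> x y /grid_adjP[j xy same]; case: (eqVneq i j) xy => [->|ij] xy.
    by move: xy; rewrite /path_adj; case/orP=> /eqP; lia.
  by rewrite (same i ij); lia.
- by move=> x; exact: ltn_ord.
- by move=> t; rewrite grid_pointE eqxx.
Qed.

Lemma grid_lower : \sum_(i < d) n i <= 6 * d * bdim adj.
Proof.
have up : \sum_(i < d) n i <= \sum_(i < d) (3 * bdim adj + 1).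
  by apply: leq_sum => i _; exact: grid_lower_coord.
have low : \sum_(i < d) 2 <= \sum_(i < d) n i by apply: leq_sum => i _.
move: up low; rewrite !sum_nat_const card_ord.
move: (\sum_(i < d) n i) (bdim adj) => s b; nia.
Qed.

Definition origin : G := grid_point (fun=> 0).
Definition corner (i : 'I_d) : G :=
  grid_point (fun j => if j == i then (n i).-1 else 0).

Lemma originE j : origin j = 0 :> nat.
Proof. by rewrite grid_pointE //; have := n_ge2 j; lia. Qed.

Lemma cornerE i j : corner i j = (if j == i then (n i).-1 else 0) :> nat.
Proof.
by rewrite grid_pointE //; case: eqP => [->|_]; [have := n_ge2 i | have := n_ge2 j]; lia.
Qed.

(* The origin and the d corners form a resolving set: vertices at the same
   distance from the origin but differing in coordinate i are told apart by
   corner i, since l1 x (corner i) = l1 x origin + (n i - 1) - 2 x_i. *)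
Lemma landmarks_resolve (x y : G) : x != y ->
  exists2 v, v \in origin |: [set corner i | i : 'I_d] & l1 x v != l1 y v.
Proof.
move=> xy; case: (eqVneq (l1 x origin) (l1 y origin)) => [same|]; last first.
  by exists origin; rewrite ?setU11.
have [i xyi] : exists i, x i != y i :> nat.
  apply/existsP; apply: contraNT xy; rewrite negb_exists => /forallP eq_xy.
  by apply/eqP/ffunP => j; apply/ord_inj/eqP; rewrite -[_ == _]negbK eq_xy.
exists (corner i); first by rewrite setU1r //; apply: imset_f.
apply: contra xyi => /eqP; move: same; rewrite !(l1_split _ _ i).
have off (v : G) j : j != i -> nat_dist (v j) (corner i j) = nat_dist (v j) (origin j).
  by move=> ji; rewrite cornerE originE (negbTE ji).
rewrite [X in _ -> _ + X = _ -> _](eq_bigr _ (fun j => off x j)).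
rewrite [X in _ -> _ = _ + X -> _](eq_bigr _ (fun j => off y j)).
move: (\sum_(j < d | j != i) _) (\sum_(j < d | j != i) _) => Rx Ry.
rewrite cornerE originE eqxx /nat_dist.
by have := ltn_ord (x i); have := ltn_ord (y i); lia.
Qed.

Lemma grid_diam (x y : G) : dist adj x y <= \sum_(i < d) (n i).-1.
Proof.
by rewrite grid_dist; apply: leq_sum => j _; have := nat_dist_lt (x j) (y j); lia.
Qed.

Lemma grid_upper : 0 < d -> bdim adj <= d.+1 * \sum_(i < d) n i.
Proof.
move=> d_pos.
have diam_pos : 0 < \sum_(i < d) (n i).-1.
  by rewrite (bigD1 (Ordinal d_pos)) //=; have := n_ge2 (Ordinal d_pos); lia.
have := bdim_landmarks diam_pos (@grid_diam).
have resolve x y : x != y -> exists2 v, v \in origin |: [set corner i | i : 'I_d]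
    & dist adj x v != dist adj y v.
  by move/landmarks_resolve => [v vS]; exists v; rewrite ?grid_dist.
move/(_ _ resolve)/leq_trans; apply; rewrite mulnC leq_mul //.
  apply: leq_trans (leq_card_setU _ _) _; rewrite cards1 add1n ltnS.
  by apply: leq_trans (leq_imset_card _ _) _; rewrite card_ord.
by apply: leq_sum => i _; exact: leq_pred.
Qed.

End Grid.

Lemma ord2_cases (i : 'I_2) : i = ord0 \/ i = ord_max.
Proof. by case: i => [[|[|//]] ?]; [left | right]; apply: val_inj. Qed.

Lemma grid_adj2E (k : 'I_2 -> nat) (u v : gridv 2 k) :
  grid_adj 2 k u v =
    (path_adj _ (u ord0) (v ord0) && (u ord_max == v ord_max :> nat)) ||
    ((u ord0 == v ord0 :> nat) && path_adj _ (u ord_max) (v ord_max)).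
Proof.
have other (i j : 'I_2) : j != i -> i = ord0 /\ j = ord_max \/ i = ord_max /\ j = ord0.
  by case: (ord2_cases i) (ord2_cases j) => -> [] ->; auto.
apply/existsP/orP => [[i /andP[uv /forallP same]]|].
  have eq_at j : j != i -> u j == v j :> nat by move=> ji; move/implyP: (same j); apply.
  by case: (ord2_cases i) uv eq_at => -> uv eq_at; [left | right]; rewrite uv eq_at.
case=> /andP[h1 h2]; [exists ord0 | exists ord_max]; rewrite ?h1 ?h2 /=;
  apply/forallP => j; apply/implyP => /other[] [_ ->] //.
Qed.

Section TwoDimensional.
Variables (m n : nat).
Hypotheses (m_ge2 : 2 <= m) (n_ge2 : 2 <= n).

Definition sides2 (i : 'I_2) : nat := if i == ord0 then m else n.

Lemma sides2_ge2 i : 2 <= sides2 i.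
Proof. by rewrite /sides2; case: ifP. Qed.

Definition to_grid (x : 'I_m * 'I_n) : gridv 2 sides2 :=
  grid_point sides2_ge2 (fun i => if i == ord0 then nat_of_ord x.1 else x.2).

Definition of_grid (y : gridv 2 sides2) : 'I_m * 'I_n := (y ord0, y ord_max).

Lemma to_gridE x : (to_grid x ord0 = x.1 :> nat) /\ (to_grid x ord_max = x.2 :> nat).
Proof. by rewrite !grid_pointE //= ltn_ord. Qed.

Lemma to_gridK : cancel to_grid of_grid.
Proof. by case=> a b; have [ea eb] := to_gridE (a, b); congr pair; apply: val_inj. Qed.

Lemma of_gridK : cancel of_grid to_grid.
Proof.
move=> y; apply/ffunP => i; apply: val_inj; rewrite /= grid_pointE.
  by case: (ord2_cases i) => ->.
by case: (ord2_cases i) => -> /=; exact: ltn_ord.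
Qed.

Lemma to_grid_adj x y : grid_adj 2 sides2 (to_grid x) (to_grid y) = grid2_adj m n x y.
Proof.
have [x1 x2] := to_gridE x; have [y1 y2] := to_gridE y.
by rewrite grid_adj2E /grid2_adj /cart_adj /path_adj x1 x2 y1 y2.
Qed.

Lemma bdim_grid2 : bdim (grid2_adj m n) = bdim (grid_adj 2 sides2).
Proof. exact: esym (bdim_iso to_gridK of_gridK to_grid_adj). Qed.

Lemma sum_sides2 : \sum_(i < 2) sides2 i = m + n.
Proof. by rewrite big_ord_recl big_ord1. Qed.

End TwoDimensional.

Lemma grid_bounds d (n : 'I_d -> nat) : 0 < d -> (forall i, 2 <= n i) ->
  \sum_(i < d) n i <= 6 * d * bdim (grid_adj d n) /\
  bdim (grid_adj d n) <= d.+1 * \sum_(i < d) n i.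
Proof. by move=> d_pos n_ge2; split; [exact: grid_lower | exact: grid_upper]. Qed.

Import Order.TTheory GRing.Theory Num.Theory.
Local Open Scope ring_scope.

Lemma rat_bounds (s b a c : nat) : (0 < a)%N -> (s <= a * b)%N -> (b <= c * s)%N ->
  a%:R^-1 * s%:R <= b%:R :> rat /\ b%:R <= c%:R * s%:R :> rat.
Proof.
move=> a_pos low up; split; last by rewrite -natrM ler_nat.
by rewrite ler_pdivrMl ?ltr0n // -natrM ler_nat.
Qed.

Theorem corollary5p3 :
  (exists c1 c2 : rat, 0 < c1 /\ 0 < c2 /\
     forall m n : nat, (2 <= m)%N -> (2 <= n)%N ->
       c1 * (m + n)%:R <= (bdim (grid2_adj m n))%:R /\
       (bdim (grid2_adj m n))%:R <= c2 * (m + n)%:R)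
  /\
  (forall d : nat, (2 <= d)%N ->
     exists c1 c2 : rat, 0 < c1 /\ 0 < c2 /\
       forall n : 'I_d -> nat, (forall i, (2 <= n i)%N) ->
         c1 * (\sum_(i < d) n i)%:R <= (bdim (grid_adj d n))%:R /\
         (bdim (grid_adj d n))%:R <= c2 * (\sum_(i < d) n i)%:R).
Proof.
split.
  exists 12%:R^-1, 3%:R; do 2!split => //.
  move=> m n m_ge2 n_ge2; rewrite (bdim_grid2 m_ge2 n_ge2).
  have [low up] := grid_bounds (isT : 0 < 2)%N (sides2_ge2 m_ge2 n_ge2).
  by rewrite sum_sides2 in low up; exact: rat_bounds.
move=> d d_ge2; have d_pos : (0 < d)%N by apply: leq_trans d_ge2.
exists (6 * d)%:R^-1, d.+1%:R; rewrite invr_gt0 !ltr0n muln_gt0 d_pos.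
split => //; split => // n n_ge2; have [low up] := grid_bounds d_pos n_ge2.
by apply: rat_bounds; rewrite ?muln_gt0 ?d_pos.
Qed.
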